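(* Let $\tau$ be any tiling of the plane by the Kari–Culik tileset $T$ described in the context, and fix any horizontal line of the grid, i.e. fix $j\in\mathbb{Z}$ and let $u=(u_k)_{k\in\mathbb{Z}}$ be the bi-infinite sequence of numerical values of the colors on the top sides of the tiles $\tau(k,j)$, $k\in\mathbb{Z}$ (with $0'$ counted as the value $0$). Then $u$ has an average: there is a real number $x$ such that the averages $\frac{1}{b-a}\sum_{k=a}^{b-1}u_k$ over finite segments $[a,b)$ converge to $x$ as the length $b-a$ tends to infinity (independently of the position of the segments).
   Context: A Wang tile is a unit square with a color on each side; a tiling of the plane assigns a tile to every cell of $\mathbb{Z}^2$ so that adjacent tiles have equal colors on their common side. The Kari–Culik tileset $T$ uses horizontal-edge (top/bottom) colors $0,0',1,2$ (with numerical values $0,0,1,2$) and vertical-edge colors from two disjoint state sets $\{s_0,s_1\}$ and $\{r_0,r_{1/3},r_{2/3}\}$. Writing a tile as (left, bottom, top, right), the 13 tiles are: $(s_0,0,0',s_0)$, $(s_1,0,0',s_1)$, $(s_0,1,2,s_0)$, $(s_1,1,2,s_1)$, $(s_0,1,1,s_1)$, $(s_1,0,1,s_0)$, $(s_1,0',1,s_0)$, $(r_0,2,1,r_{1/3})$, $(r_{1/3},2,1,r_{2/3})$, $(r_{1/3},1,0,r_0)$, $(r_{2/3},1,0,r_{1/3})$, $(r_0,1,1,r_{2/3})$, $(r_{2/3},2,0,r_0)$. *)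

From Stdlib Require Import Reals ZArith List.
Open Scope R_scope.

Inductive hcolor : Type := H0 | H0' | H1 | H2.

Definition hval (c : hcolor) : R :=
  match c with H0 => 0 | H0' => 0 | H1 => 1 | H2 => 2 end.

Inductive vcolor : Type := S0 | S1 | R0 | R13 | R23.

Record tile : Type := mkTile {
  t_left : vcolor; t_bottom : hcolor; t_top : hcolor; t_right : vcolor }.

Definition KC_tiles : list tile :=
  mkTile S0 H0 H0' S0 :: mkTile S1 H0 H0' S1 ::
  mkTile S0 H1 H2 S0  :: mkTile S1 H1 H2 S1 ::
  mkTile S0 H1 H1 S1  :: mkTile S1 H0 H1 S0 ::
  mkTile S1 H0' H1 S0 ::
  mkTile R0 H2 H1 R13 :: mkTile R13 H2 H1 R23 ::
  mkTile R13 H1 H0 R0 :: mkTile R23 H1 H0 R13 ::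
  mkTile R0 H1 H1 R23 :: mkTile R23 H2 H0 R0 :: nil.

(* A tiling of Z^2 by the Kari-Culik tileset: tau k j is the tile at
   column k, row j (row j+1 lies above row j). *)
Definition KC_tiling (tau : Z -> Z -> tile) : Prop :=
  (forall k j, In (tau k j) KC_tiles) /\
  (forall k j, t_right (tau k j) = t_left (tau (k + 1)%Z j)) /\
  (forall k j, t_top (tau k j) = t_bottom (tau k (j + 1)%Z)).

(* sum_{k=a}^{b-1} u k, for a <= b (0 otherwise) *)
Definition seg_sum (u : Z -> R) (a b : Z) : R :=
  fold_right Rplus 0
    (map (fun i : nat => u (a + Z.of_nat i)%Z) (seq 0 (Z.to_nat (b - a)))).

Definition seg_avg (u : Z -> R) (a b : Z) : R := seg_sum u a b / IZR (b - a).

Definition has_average (u : Z -> R) (x : R) : Prop :=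
  forall eps : R, eps > 0 ->
    exists N : Z, forall a b : Z, (N <= b - a)%Z -> Rabs (seg_avg u a b - x) < eps.

(* In each row of a Kari-Culik tiling all tiles are s-tiles or all are r-tiles, and
   the row above then sums, on every segment, to 2 (resp. 1/3) times the row below up to
   a bounded carry. The upper and lower averages of a row (Fekete limits of the maximal
   and minimal segment sums) are therefore both doubled on [0, 1] or both divided by 3
   on [1, 2] from one row to the next, so their ratio is invariant. As [log_6 2] is
   irrational, the orbit of the upper average enters every interval [(1, r)] with
   [r > 1]; were the ratio [r] larger than 1, the lower average would then lie below 1
   while the upper one lies above 1, which no row allows. *)

From Pilot Require Import Defs.
From Stdlib Require Import Reals ZArith Lra Lia List Classical ClassicalEpsilon.
Open Scope R_scope.

Definition segsum (w : Z -> R) (a : Z) (n : nat) : R :=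
  fold_right Rplus 0 (map (fun i : nat => w (a + Z.of_nat i)%Z) (seq 0 n)).

Lemma segsum_S w a n : segsum w a (S n) = w a + segsum w (a + 1)%Z n.
Proof.
  unfold segsum; simpl. rewrite Z.add_0_r, <- seq_shift, map_map.
  f_equal; f_equal; apply map_ext; intros i; f_equal; lia.
Qed.

Lemma segsum_add w n m a :
  segsum w a (n + m) = segsum w a n + segsum w (a + Z.of_nat n)%Z m.
Proof.
  revert a; induction n as [|n IH]; intros a.
  - rewrite Z.add_0_r; unfold segsum at 2; simpl; ring.
  - simpl plus; rewrite !segsum_S, IH.
    replace (a + 1 + Z.of_nat n)%Z with (a + Z.of_nat (S n))%Z by lia; ring.
Qed.

Lemma segsum_bounds w lo hi : (forall k, lo <= w k <= hi) ->
  forall n a, INR n * lo <= segsum w a n <= INR n * hi.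
Proof.
  intros Hw n; induction n as [|n IH]; intros a.
  - unfold segsum; simpl; lra.
  - rewrite segsum_S, S_INR; specialize (IH (a + 1)%Z); specialize (Hw a); lra.
Qed.

Lemma segsum_opp w n a : segsum (fun k => - w k) a n = - segsum w a n.
Proof.
  revert a; induction n as [|n IH]; intros a.
  - unfold segsum; simpl; lra.
  - rewrite !segsum_S, IH; ring.
Qed.

Lemma segsum_telescope w v c lam :
  (forall k, w k = lam * v k + (c k - c (k + 1)%Z)) ->
  forall n a, segsum w a n = lam * segsum v a n + (c a - c (a + Z.of_nat n)%Z).
Proof.
  intros Hw n; induction n as [|n IH]; intros a.
  - unfold segsum; simpl; rewrite Z.add_0_r; ring.
  - rewrite !segsum_S, IH, Hw.
    replace (a + 1 + Z.of_nat n)%Z with (a + Z.of_nat (S n))%Z by lia; ring.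
Qed.

Lemma Rle_div_of_mul a b c : 0 < c -> a * c <= b -> a <= b / c.
Proof.
  intros Hc H; apply (Rmult_le_reg_r c); [exact Hc|].
  unfold Rdiv; rewrite Rmult_assoc, Rinv_l, Rmult_1_r by lra; exact H.
Qed.

Definition Rsup (E : R -> Prop) : R := epsilon (inhabits 0) (is_lub E).

Lemma Rsup_lub E : bound E -> (exists x, E x) -> is_lub E (Rsup E).
Proof.
  intros HE Hne; unfold Rsup; apply epsilon_spec.
  destruct (completeness E HE Hne) as [m Hm]; exists m; exact Hm.
Qed.

Definition max_segsum (w : Z -> R) (n : nat) : R :=
  Rsup (fun y => exists a, y = segsum w a n).

(* [upper_avg w] is [inf_n max_segsum w n / n], written as minus a supremum; by
   subadditivity of [max_segsum w] (Fekete) it is also the limit. *)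
Definition upper_avg (w : Z -> R) : R :=
  - Rsup (fun y => exists n, (0 < n)%nat /\ y = - (max_segsum w n / INR n)).

Definition lower_avg (w : Z -> R) : R := - upper_avg (fun k => - w k).

Section UpperAverage.

Variables (w : Z -> R) (lo hi : R).
Hypothesis w_bounds : forall k, lo <= w k <= hi.

Lemma max_segsum_lub n : is_lub (fun y => exists a, y = segsum w a n) (max_segsum w n).
Proof.
  apply Rsup_lub.
  - exists (INR n * hi); intros y [a ->]; apply (segsum_bounds w lo hi w_bounds).
  - exists (segsum w 0%Z n), 0%Z; reflexivity.
Qed.

Lemma segsum_le_max n a : segsum w a n <= max_segsum w n.
Proof. apply (proj1 (max_segsum_lub n)); exists a; reflexivity. Qed.

Lemma max_segsum_le n y : (forall a, segsum w a n <= y) -> max_segsum w n <= y.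
Proof. intros H; apply (proj2 (max_segsum_lub n)); intros z [a ->]; apply H. Qed.

Lemma max_segsum_bounds n : INR n * lo <= max_segsum w n <= INR n * hi.
Proof.
  pose proof (segsum_le_max n 0%Z); pose proof (segsum_bounds w lo hi w_bounds n 0%Z).
  split; [lra|]. apply max_segsum_le; intros a; apply (segsum_bounds w lo hi w_bounds).
Qed.

Lemma max_segsum_subadd n m : max_segsum w (n + m) <= max_segsum w n + max_segsum w m.
Proof.
  apply max_segsum_le; intros a; rewrite segsum_add.
  pose proof (segsum_le_max n a); pose proof (segsum_le_max m (a + Z.of_nat n)%Z); lra.
Qed.

Lemma max_segsum_avg_ge n : (0 < n)%nat -> lo <= max_segsum w n / INR n.
Proof.
  intros Hn; apply Rle_div_of_mul; [apply lt_0_INR; exact Hn|].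
  rewrite Rmult_comm; apply max_segsum_bounds.
Qed.

Lemma upper_avg_glb :
  is_lub (fun y => exists n, (0 < n)%nat /\ y = - (max_segsum w n / INR n)) (- upper_avg w).
Proof.
  unfold upper_avg; rewrite Ropp_involutive; apply Rsup_lub.
  - exists (- lo); intros y [n [Hn ->]]; pose proof (max_segsum_avg_ge n Hn); lra.
  - exists (- (max_segsum w 1 / INR 1)), 1%nat; split; [lia|reflexivity].
Qed.

Lemma upper_avg_le_max n : (0 < n)%nat -> upper_avg w * INR n <= max_segsum w n.
Proof.
  intros Hn; pose proof (lt_0_INR n Hn).
  assert (Hle : - (max_segsum w n / INR n) <= - upper_avg w)
    by (apply (proj1 upper_avg_glb); exists n; split; [lia|reflexivity]).
  replace (max_segsum w n) with (max_segsum w n / INR n * INR n) by (field; lra).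
  apply Rmult_le_compat_r; lra.
Qed.

Lemma upper_avg_bounds : lo <= upper_avg w <= hi.
Proof.
  split.
  - apply Ropp_le_cancel, (proj2 upper_avg_glb).
    intros y [n [Hn ->]]; pose proof (max_segsum_avg_ge n Hn); lra.
  - pose proof (upper_avg_le_max 1 (Nat.lt_0_1)); pose proof (max_segsum_bounds 1).
    simpl in *; lra.
Qed.

Lemma upper_avg_approx eps : 0 < eps ->
  exists n0, (0 < n0)%nat /\ max_segsum w n0 < (upper_avg w + eps) * INR n0.
Proof.
  intros He; apply NNPP; intros Hno.
  assert (Hub : is_upper_bound (fun y => exists n, (0 < n)%nat /\ y = - (max_segsum w n / INR n))
                  (- (upper_avg w + eps))).
  { intros y [n [Hn ->]]; pose proof (lt_0_INR n Hn).
    assert ((upper_avg w + eps) * INR n <= max_segsum w n)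
      by (apply Rnot_lt_le; intros Hlt; apply Hno; exists n; auto).
    assert (upper_avg w + eps <= max_segsum w n / INR n) by (apply Rle_div_of_mul; lra).
    lra. }
  pose proof (proj2 upper_avg_glb _ Hub); lra.
Qed.

(* Peel off blocks of length [n0]; the remainder, shorter than [n0], costs at most
   [(hi - lo) n0]. *)
Lemma max_segsum_linear_bound n0 mu : (0 < n0)%nat -> max_segsum w n0 <= mu * INR n0 ->
  forall n, max_segsum w n <= mu * INR n + (hi - lo) * INR n0.
Proof.
  intros Hn0 Hmu n; pose proof (lt_0_INR n0 Hn0).
  assert (Hlo : lo <= mu) by (pose proof (max_segsum_bounds n0); nra).
  induction n as [n IH] using (well_founded_induction lt_wf).
  destruct (lt_dec n n0) as [Hlt|Hge].
  - pose proof (max_segsum_bounds n); pose proof (pos_INR n); pose proof (w_bounds 0%Z).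
    assert (INR n <= INR n0) by (apply le_INR; lia). nra.
  - replace n with (n0 + (n - n0))%nat by lia.
    pose proof (max_segsum_subadd n0 (n - n0)); pose proof (IH (n - n0)%nat ltac:(lia)).
    rewrite plus_INR; lra.
Qed.

Lemma upper_avg_tail eps : 0 < eps ->
  exists N, forall n, (N <= n)%nat -> max_segsum w n < (upper_avg w + eps) * INR n.
Proof.
  intros He; destruct (upper_avg_approx (eps / 2)) as [n0 [Hn0 Happ]]; [lra|].
  destruct (INR_archimed (eps / 2) ((hi - lo) * INR n0)) as [N HN]; [lra|].
  exists N; intros n Hn.
  pose proof (max_segsum_linear_bound n0 (upper_avg w + eps / 2) Hn0 (Rlt_le _ _ Happ) n).
  assert (INR N <= INR n) by (apply le_INR; lia). nra.
Qed.

End UpperAverage.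

Lemma upper_avg_le_scale w v lo hi lo' hi' lam C :
  (forall k, lo <= w k <= hi) -> (forall k, lo' <= v k <= hi') -> 0 <= lam ->
  (forall a n, segsum w a n <= lam * segsum v a n + C) ->
  upper_avg w <= lam * upper_avg v.
Proof.
  intros Hw Hv Hlam HC; apply Rle_plus_epsilon; intros eps He.
  set (e := eps / (lam + 1)).
  assert (He' : 0 < e) by (apply Rdiv_lt_0_compat; lra).
  assert (Heps : eps = (lam + 1) * e) by (unfold e; field; lra).
  destruct (upper_avg_tail v lo' hi' Hv e He') as [N HN].
  destruct (INR_archimed e C He') as [M HM].
  assert (HC0 : 0 <= C) by (pose proof (HC 0%Z 0%nat) as H0; unfold segsum in H0; simpl in H0; lra).
  set (n := (N + M)%nat).
  assert (HMn : INR M <= INR n) by (apply le_INR; unfold n; lia).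
  assert (Hn : (0 < n)%nat) by (destruct M; [simpl in HM; lra|unfold n; lia]).
  assert (Hmax : max_segsum w n <= lam * max_segsum v n + C).
  { apply (max_segsum_le w lo hi Hw); intros a.
    pose proof (segsum_le_max v lo' hi' Hv n a); pose proof (HC a n); nra. }
  pose proof (upper_avg_le_max w lo hi Hw n Hn).
  pose proof (HN n (Nat.le_add_r N M)); pose proof (lt_0_INR n Hn).
  nra.
Qed.

Lemma avg_scale w v lo hi lo' hi' lam C :
  (forall k, lo <= w k <= hi) -> (forall k, lo' <= v k <= hi') -> 0 < lam ->
  (forall a n, - C <= segsum w a n - lam * segsum v a n <= C) ->
  upper_avg w = lam * upper_avg v /\ lower_avg w = lam * lower_avg v.
Proof.
  assert (Hup : forall w v lo hi lo' hi',
    (forall k, lo <= w k <= hi) -> (forall k, lo' <= v k <= hi') -> 0 < lam ->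
    (forall a n, - C <= segsum w a n - lam * segsum v a n <= C) ->
    upper_avg w = lam * upper_avg v).
  { clear; intros w v lo hi lo' hi' Hw Hv Hlam HC.
    apply Rle_antisym.
    - apply (upper_avg_le_scale w v lo hi lo' hi' lam C Hw Hv); [lra|].
      intros a n; pose proof (HC a n); lra.
    - assert (Hinv : upper_avg v <= / lam * upper_avg w).
      { apply (upper_avg_le_scale v w lo' hi' lo hi (/ lam) (C / lam) Hv Hw).
        - left; apply Rinv_0_lt_compat, Hlam.
        - intros a n; pose proof (HC a n).
          apply (Rmult_le_reg_l lam); [exact Hlam|]; field_simplify; lra. }
      apply (Rmult_le_compat_l lam) in Hinv; [|lra].
      rewrite <- Rmult_assoc, Rinv_r, Rmult_1_l in Hinv by lra; exact Hinv. }
  intros Hw Hv Hlam HC; split; [exact (Hup w v lo hi lo' hi' Hw Hv Hlam HC)|].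
  unfold lower_avg; rewrite (Hup (fun k => - w k) (fun k => - v k) (- hi) (- lo) (- hi') (- lo'));
    [ring| | |exact Hlam|].
  - intros k; specialize (Hw k); lra.
  - intros k; specialize (Hv k); lra.
  - intros a n; rewrite !segsum_opp; pose proof (HC a n); lra.
Qed.

Lemma lower_avg_bounds w lo hi : (forall k, lo <= w k <= hi) -> lo <= lower_avg w <= hi.
Proof.
  intros Hw; unfold lower_avg.
  assert (Hn : forall k, - hi <= - w k <= - lo) by (intros k; specialize (Hw k); lra).
  pose proof (upper_avg_bounds _ _ _ Hn); lra.
Qed.

Lemma has_average_of_lower_eq_upper w lo hi : (forall k, lo <= w k <= hi) ->
  lower_avg w = upper_avg w -> has_average w (upper_avg w).
Proof.
  intros Hw Heq eps He.
  assert (Hn : forall k, - hi <= - w k <= - lo) by (intros k; specialize (Hw k); lra).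
  destruct (upper_avg_tail w lo hi Hw eps He) as [N1 T1].
  destruct (upper_avg_tail _ _ _ Hn eps He) as [N2 T2].
  exists (Z.of_nat (S (N1 + N2))); intros a b Hab.
  set (n := Z.to_nat (b - a)).
  assert (HI : IZR (b - a) = INR n) by (unfold n; rewrite INR_IZR_INZ, Z2Nat.id by lia; reflexivity).
  assert (Hn0 : 0 < INR n) by (apply lt_0_INR; unfold n; lia).
  unfold seg_avg; change (seg_sum w a b) with (segsum w a n); rewrite HI.
  pose proof (T1 n ltac:(unfold n; lia)); pose proof (T2 n ltac:(unfold n; lia)).
  pose proof (segsum_le_max w lo hi Hw n a); pose proof (segsum_le_max _ _ _ Hn n a).
  rewrite segsum_opp in *; unfold lower_avg in Heq.
  set (avg := segsum w a n / INR n).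
  assert (segsum w a n = avg * INR n) by (unfold avg; field; lra).
  apply Rabs_def1; nra.
Qed.

Lemma pigeonhole_nat (N : nat) (f : nat -> nat) :
  (forall k, (k <= N)%nat -> (f k < N)%nat) -> exists i j, (i < j <= N)%nat /\ f i = f j.
Proof.
  intros Hf; apply NNPP; intros Hinj.
  assert (Hnd : NoDup (map f (seq 0 (S N)))).
  { apply NoDup_map_NoDup_ForallPairs; [|apply seq_NoDup].
    intros i j Hi Hj Hij; apply in_seq in Hi, Hj.
    destruct (Nat.lt_trichotomy i j) as [Hlt|[Heq|Hgt]]; [|exact Heq|];
      exfalso; apply Hinj; [exists i, j|exists j, i]; split; auto; lia. }
  apply NoDup_incl_length with (l' := seq 0 N) in Hnd.
  - rewrite length_map, !length_seq in Hnd; lia.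
  - intros y Hy; apply in_map_iff in Hy as [k [<- Hk]]; apply in_seq in Hk.
    apply in_seq; specialize (Hf k); lia.
Qed.

Lemma Int_part_nat_range x (N : nat) : 0 <= x < INR N -> (0 <= Int_part x < Z.of_nat N)%Z.
Proof.
  intros Hx; destruct (base_Int_part x) as [H1 H2].
  assert (-1 < Int_part x)%Z by (apply lt_IZR; simpl; lra).
  assert (Int_part x < Z.of_nat N)%Z by (apply lt_IZR; rewrite <- INR_IZR_INZ; lra).
  lia.
Qed.

Lemma exists_nat_mul_between d y : 0 < d -> 0 <= y -> exists t : nat, y < INR t * d <= y + d.
Proof.
  intros Hd Hy; destruct (archimed (y / d)) as [H1 H2].
  assert (Hyd : 0 <= y / d) by (apply Rmult_le_pos; [lra|left; apply Rinv_0_lt_compat, Hd]).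
  assert (Hup : (0 <= up (y / d))%Z) by (apply le_IZR; lra).
  exists (Z.to_nat (up (y / d))); rewrite INR_IZR_INZ, Z2Nat.id by exact Hup.
  assert (y = y / d * d) by (field; lra). nra.
Qed.

Section Rotation.

Variable theta : R.
Hypothesis theta_irrational : forall (s : nat) (m : Z), (0 < s)%nat -> INR s * theta <> IZR m.

(* Dirichlet: two of the N + 1 points [frac (k theta)], 0 <= k <= N, share one of
   the N bins of width 1/N. *)
Lemma rotation_near_integer eps : 0 < eps ->
  exists (s : nat) (m : Z), (0 < s)%nat /\ 0 < Rabs (INR s * theta - IZR m) < eps.
Proof.
  intros He; destruct (INR_archimed eps 1 He) as [N HN].
  assert (HN0 : 0 < INR N) by (pose proof (pos_INR N); nra).
  set (x k := INR N * frac_part (INR k * theta)).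
  assert (Hx : forall k, 0 <= x k < INR N).
  { intros k; pose proof (base_fp (INR k * theta)); unfold x; nra. }
  destruct (pigeonhole_nat N (fun k => Z.to_nat (Int_part (x k)))) as [i [j [Hij Hbin]]].
  { intros k _; pose proof (Int_part_nat_range _ _ (Hx k)); lia. }
  assert (Hbin' : Int_part (x i) = Int_part (x j)).
  { pose proof (Int_part_nat_range _ _ (Hx i)); pose proof (Int_part_nat_range _ _ (Hx j)).
    apply Z2Nat.inj; lia. }
  exists (j - i)%nat, (Int_part (INR j * theta) - Int_part (INR i * theta))%Z; split; [lia|].
  replace (INR (j - i) * theta - IZR (Int_part (INR j * theta) - Int_part (INR i * theta)))
    with (frac_part (INR j * theta) - frac_part (INR i * theta))
    by (rewrite minus_INR, minus_IZR by lia; unfold frac_part; ring).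
  split.
  - apply Rabs_pos_lt; intros Hd.
    apply (theta_irrational (j - i) (Int_part (INR j * theta) - Int_part (INR i * theta)));
      [lia|].
    rewrite minus_INR, minus_IZR by lia; unfold frac_part in Hd; lra.
  - pose proof (base_Int_part (x i)); pose proof (base_Int_part (x j)).
    rewrite Hbin' in *.
    assert (Hgap : Rabs (INR N * (frac_part (INR j * theta) - frac_part (INR i * theta))) < 1)
      by (apply Rabs_def1; unfold x in *; lra).
    rewrite Rabs_mult, Rabs_pos_eq in Hgap by lra. nra.
Qed.

Lemma rotation_dense c q : 0 < q <= 1 ->
  exists (k : nat) (n : Z), IZR n < c + INR k * theta < IZR n + q.
Proof.
  intros Hq; destruct (rotation_near_integer q (proj1 Hq)) as [s [m [Hs [Hd0 Hdq]]]].
  set (d := INR s * theta - IZR m) in *.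
  destruct (base_Int_part c) as [Hc1 Hc2].
  assert (Hmul : forall t : nat, c + INR (t * s) * theta = c + INR t * IZR m + INR t * d)
    by (intros t; unfold d; rewrite mult_INR; ring).
  destruct (Rlt_or_le 0 d) as [Hpos|Hneg].
  - rewrite Rabs_pos_eq in Hdq by lra.
    set (n0 := (Int_part c + 1)%Z).
    destruct (exists_nat_mul_between d (IZR n0 - c)) as [t Ht];
      [lra|unfold n0; rewrite plus_IZR; lra|].
    exists (t * s)%nat, (n0 + Z.of_nat t * m)%Z.
    rewrite Hmul, plus_IZR, mult_IZR, <- INR_IZR_INZ; lra.
  - rewrite Rabs_left1 in Hdq by lra.
    assert (Hneg' : d <> 0) by (intros Hz; rewrite Hz, Rabs_R0 in Hd0; lra).
    set (n0 := (Int_part c - 1)%Z).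
    destruct (exists_nat_mul_between (- d) (c - IZR n0 - q)) as [t Ht];
      [lra|unfold n0; rewrite minus_IZR; lra|].
    exists (t * s)%nat, (n0 + Z.of_nat t * m)%Z.
    rewrite Hmul, plus_IZR, mult_IZR, <- INR_IZR_INZ; lra.
Qed.

End Rotation.

Lemma ln_le_compat x y : 0 < x -> x <= y -> ln x <= ln y.
Proof. intros Hx [Hxy|<-]; [left; apply ln_increasing|right]; auto. Qed.

Lemma ln_pos x : 1 < x -> 0 < ln x.
Proof. intros Hx; rewrite <- ln_1; apply ln_increasing; lra. Qed.

Lemma ln_6 : ln 6 = ln 2 + ln 3.
Proof. rewrite <- ln_mult by lra; f_equal; lra. Qed.

Lemma pow2_mod3 s : exists q, (2 ^ s = 3 * q + 1 \/ 2 ^ s = 3 * q + 2)%nat.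
Proof.
  induction s as [|s [q [IH|IH]]]; [exists 0%nat; left; reflexivity| |];
    rewrite Nat.pow_succ_r', IH; [exists (2 * q)%nat|exists (2 * q + 1)%nat]; lia.
Qed.

(* It would give [2 ^ s = 6 ^ m] with [m > 0], but [3] divides [6 ^ m] and not [2 ^ s]. *)
Lemma log6_2_irrational (s : nat) (m : Z) : (0 < s)%nat -> INR s * (ln 2 / ln 6) <> IZR m.
Proof.
  intros Hs Heq; pose proof (ln_pos 2 ltac:(lra)); pose proof (ln_pos 3 ltac:(lra)).
  pose proof ln_6; pose proof (lt_0_INR s Hs).
  assert (Hln : INR s * ln 2 = IZR m * ln 6) by (rewrite <- Heq; field; lra).
  assert (Hm : (0 < m)%Z) by (apply lt_IZR; simpl; nra).
  rewrite <- (Z2Nat.id m), <- INR_IZR_INZ in Hln by lia.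
  rewrite <- !ln_pow in Hln by lra; apply ln_inv in Hln; try (apply pow_lt; lra).
  replace 2 with (INR 2) in Hln by (simpl; ring); replace 6 with (INR 6) in Hln by (simpl; ring).
  rewrite <- !pow_INR in Hln; apply INR_eq in Hln.
  destruct (pow2_mod3 s) as [q Hq].
  replace (Z.to_nat m) with (S (Z.to_nat m - 1)) in Hln by lia.
  rewrite Nat.pow_succ_r' in Hln; lia.
Qed.

(* One row of the tiling acts on averages as [x -> 2 x] on [0, 1] (s-tiles) or
   [x -> x / 3] on [1, 2] (r-tiles). *)
Definition kc_step (x y : R) : Prop := (0 <= x <= 1 /\ y = 2 * x) \/ (1 <= x <= 2 /\ y = x / 3).

Section KCOrbit.

Variable x : nat -> R.
Hypothesis x_orbit : forall k, kc_step (x k) (x (S k)).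

Lemma kc_orbit_bounds k : 0 <= x k <= 2.
Proof. destruct (x_orbit k); lra. Qed.

Lemma kc_orbit_pos : 0 < x 0 -> forall k, 0 < x k.
Proof. intros H0 k; induction k as [|k IH]; [exact H0|destruct (x_orbit k); lra]. Qed.

Lemma kc_orbit_log : 0 < x 0 ->
  forall k, exists e : nat, ln (x k) = ln (x 0) + INR k * ln 2 - INR e * ln 6.
Proof.
  intros H0 k; induction k as [|k [e IH]]; [exists 0%nat; simpl; ring|].
  pose proof (kc_orbit_pos H0 k); rewrite S_INR.
  destruct (x_orbit k) as [[_ ->]|[_ ->]].
  - exists e; rewrite ln_mult, IH by lra; ring.
  - exists (S e); unfold Rdiv; rewrite ln_mult, ln_Rinv, IH, S_INR, ln_6 by lra; ring.
Qed.

Lemma kc_orbit_reaches_third : 0 < x 0 -> exists K, 1 / 3 <= x K.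
Proof.
  intros H0; apply NNPP; intros Hno.
  assert (Hdouble : forall k, x k = 2 ^ k * x 0).
  { induction k as [|k IH]; [simpl; ring|].
    assert (x k < 1 / 3) by (apply Rnot_le_lt; intros Hk; apply Hno; exists k; exact Hk).
    destruct (x_orbit k) as [[_ ->]|[? _]]; [rewrite IH; simpl; ring|lra]. }
  destruct (INR_archimed (x 0) (1 / 3) H0) as [N HN].
  assert (HN2 : INR N < 2 ^ N)
    by (rewrite <- (pow_INR 2); replace (INR 2) with 2 by (simpl; ring);
        apply lt_INR, Nat.pow_gt_lin_r; lia).
  apply Hno; exists N; rewrite Hdouble; nra.
Qed.

Lemma kc_orbit_stays_third K : 1 / 3 <= x K -> forall k, 1 / 3 <= x (K + k).
Proof.
  intros HK k; induction k as [|k IH]; [rewrite Nat.add_0_r; exact HK|].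
  rewrite Nat.add_succ_r; destruct (x_orbit (K + k)); lra.
Qed.

(* In logarithmic scale base 6, the orbit is the rotation by [log_6 2] of the
   circle [[log_6 (1/3), log_6 2]]; its density forces a visit to [(0, log_6 r)]. *)
Lemma kc_orbit_hits_of_ge_third : (forall k, 1 / 3 <= x k) ->
  forall r, 1 < r -> exists k, 1 < x k < r.
Proof.
  intros Hthird r Hr.
  assert (H0 : 0 < x 0) by (specialize (Hthird 0%nat); lra).
  pose proof (ln_pos 2 ltac:(lra)) as L2; pose proof (ln_pos 3 ltac:(lra)) as L3; pose proof ln_6 as L6.
  set (r' := Rmin r 2).
  assert (Hr' : 1 < r' <= 2) by (unfold r', Rmin; destruct Rle_dec; lra).
  assert (Hlr : 0 < ln r' <= ln 2) by (split; [apply ln_pos|apply ln_le_compat]; lra).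
  destruct (rotation_dense (ln 2 / ln 6) log6_2_irrational (ln (x 0) / ln 6) (ln r' / ln 6))
    as [k [n Hn]].
  { split; [apply Rdiv_lt_0_compat|apply (Rmult_le_reg_r (ln 6)); [|field_simplify]]; lra. }
  destruct (kc_orbit_log H0 k) as [e He].
  assert (Hscaled : IZR n * ln 6 < ln (x 0) + INR k * ln 2 < IZR n * ln 6 + ln r').
  { replace (ln (x 0) + INR k * ln 2) with ((ln (x 0) / ln 6 + INR k * (ln 2 / ln 6)) * ln 6)
      by (field; lra).
    replace (ln r') with (ln r' / ln 6 * ln 6) by (field; lra).
    assert (0 < ln 6) by lra; split; nra. }
  pose proof (kc_orbit_bounds k) as Hxk2; pose proof (kc_orbit_pos H0 k) as Hxk0.
  assert (Hlo : - ln 3 <= ln (x k))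
    by (rewrite <- ln_Rinv by lra; apply ln_le_compat; [|specialize (Hthird k)]; lra).
  assert (Hhi : ln (x k) <= ln 2) by (apply ln_le_compat; lra).
  set (d := (n - Z.of_nat e)%Z).
  assert (Hd : IZR d * ln 6 < ln (x k) < IZR d * ln 6 + ln r')
    by (unfold d; rewrite minus_IZR, <- INR_IZR_INZ; lra).
  assert (Hd0 : d = 0%Z).
  { destruct (Z.lt_trichotomy d 0) as [Hneg|[Hz|Hpos]]; [exfalso| exact Hz |exfalso].
    - assert (IZR d <= -1) by (apply IZR_le; lia); nra.
    - assert (1 <= IZR d) by (apply IZR_le; lia); nra. }
  rewrite Hd0, Rmult_0_l, Rplus_0_l in Hd.
  exists k; split.
  - apply ln_lt_inv; [lra|lra|rewrite ln_1; lra].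
  - apply Rlt_le_trans with r'; [apply ln_lt_inv; lra|apply Rmin_l].
Qed.

End KCOrbit.

Lemma kc_orbit_hits (x : nat -> R) : (forall k, kc_step (x k) (x (S k))) -> 0 < x 0%nat ->
  forall r, 1 < r -> exists k, 1 < x k < r.
Proof.
  intros Hx H0 r Hr; destruct (kc_orbit_reaches_third x Hx H0) as [K HK].
  destruct (kc_orbit_hits_of_ge_third (fun k => x (K + k)%nat)) with (r := r) as [k Hk].
  - intros k; rewrite Nat.add_succ_r; apply Hx.
  - apply (kc_orbit_stays_third x Hx K HK).
  - exact Hr.
  - exists (K + k)%nat; exact Hk.
Qed.

Definition kc_pair_step (a b a' b' : R) : Prop :=
  (0 <= a <= 1 /\ 0 <= b <= 1 /\ a' = 2 * a /\ b' = 2 * b) \/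
  (1 <= a <= 2 /\ 1 <= b <= 2 /\ a' = a / 3 /\ b' = b / 3).

(* Both orbits are multiplied by the same factors, so [al k * be 0 = be k * al 0];
   when [al k] is slightly above 1, [be k] is then below 1, which no step allows. *)
Lemma kc_pair_orbit_not_gt (al be : nat -> R) :
  (forall k, kc_pair_step (al k) (be k) (al (S k)) (be (S k))) -> ~ be 0%nat < al 0%nat.
Proof.
  intros Hp Hlt.
  assert (Hal : forall k, kc_step (al k) (al (S k)))
    by (intros k; destruct (Hp k) as [[? [? [? ?]]]|[? [? [? ?]]]]; [left|right]; tauto).
  assert (Hbe : forall k, kc_step (be k) (be (S k)))
    by (intros k; destruct (Hp k) as [[? [? [? ?]]]|[? [? [? ?]]]]; [left|right]; tauto).
  assert (Hcross : forall k, al k * be 0%nat = be k * al 0%nat).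
  { induction k as [|k IH]; [ring|].
    destruct (Hp k) as [[? [? [-> ->]]]|[? [? [-> ->]]]]; lra. }
  pose proof (kc_orbit_bounds al Hal 0) as Ha0; pose proof (kc_orbit_bounds be Hbe 0) as Hb0.
  set (r := 1 + (al 0%nat - be 0%nat) / 2).
  destruct (kc_orbit_hits al Hal ltac:(lra) r ltac:(unfold r; lra)) as [k Hk].
  assert (Hbek : be k < 1) by (specialize (Hcross k); unfold r in Hk; nra).
  destruct (Hp k); lra.
Qed.

Lemma kc_pair_orbit_eq (al be : nat -> R) :
  (forall k, kc_pair_step (al k) (be k) (al (S k)) (be (S k))) -> al 0%nat = be 0%nat.
Proof.
  intros Hp.
  assert (Hp' : forall k, kc_pair_step (be k) (al k) (be (S k)) (al (S k)))
    by (intros k; destruct (Hp k); [left|right]; tauto).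
  destruct (Rtotal_order (al 0%nat) (be 0%nat)) as [Hlt|[Heq|Hgt]]; [|exact Heq|];
    exfalso; [exact (kc_pair_orbit_not_gt be al Hp' Hlt)|exact (kc_pair_orbit_not_gt al be Hp Hgt)].
Qed.

Definition row (tau : Z -> Z -> tile) (r : Z) (k : Z) : R := hval (t_top (tau k r)).

(* Reading the vertical colors as carries, every tile satisfies
   [factor * bottom + carry left = top + carry right], with [factor = 2] and
   bottom in [0, 1] on the s-tiles, [factor = 1/3] and bottom in [1, 2] on the r-tiles. *)
Definition factor (c : vcolor) : R := match c with S0 | S1 => 2 | _ => / 3 end.

Definition carry (c : vcolor) : R :=
  match c with S0 => 0 | S1 => 1 | Defs.R0 => 0 | R13 => - (1 / 3) | R23 => - (2 / 3) end.

Lemma carry_bounds c : -1 <= carry c <= 1.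
Proof. destruct c; simpl; lra. Qed.

Lemma hval_bounds c : 0 <= hval c <= 2.
Proof. destruct c; simpl; lra. Qed.

Lemma KC_tile_spec t : In t KC_tiles ->
  factor (t_right t) = factor (t_left t) /\
  hval (t_top t) = factor (t_left t) * hval (t_bottom t) + (carry (t_left t) - carry (t_right t)) /\
  ((factor (t_left t) = 2 /\ 0 <= hval (t_bottom t) <= 1) \/
   (factor (t_left t) = / 3 /\ 1 <= hval (t_bottom t) <= 2)).
Proof.
  intros Ht; repeat (destruct Ht as [<-|Ht]; [simpl; split; [reflexivity|split; [lra|lra]]|]).
  destruct Ht.
Qed.

Lemma Z_shift_invariant {A : Type} (f : Z -> A) :
  (forall k, f (k + 1)%Z = f k) -> forall k, f k = f 0%Z.
Proof.
  intros H k; induction k using Z.peano_ind; [reflexivity| |].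
  - rewrite <- IHk, <- Z.add_1_r; apply H.
  - rewrite <- IHk, <- (H (Z.pred k)); f_equal; lia.
Qed.

Lemma KC_row_relation tau : KC_tiling tau -> forall r, exists lam,
  ((lam = 2 /\ forall k, 0 <= row tau r k <= 1) \/ (lam = / 3 /\ forall k, 1 <= row tau r k <= 2)) /\
  forall a n, - 2 <= segsum (row tau (r + 1)) a n - lam * segsum (row tau r) a n <= 2.
Proof.
  intros [Hin [Hh Hv]] r.
  set (lam := factor (t_left (tau 0%Z (r + 1)%Z))).
  assert (Hlam : forall k, factor (t_left (tau k (r + 1)%Z)) = lam).
  { apply (Z_shift_invariant (fun k => factor (t_left (tau k (r + 1)%Z)))); intros k.
    rewrite <- Hh; apply (KC_tile_spec _ (Hin k _)). }
  assert (Hbot : forall k, row tau r k = hval (t_bottom (tau k (r + 1)%Z)))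
    by (intros k; unfold row; rewrite Hv; reflexivity).
  assert (Htop : forall k, row tau (r + 1) k = lam * row tau r k
                   + (carry (t_left (tau k (r + 1)%Z)) - carry (t_left (tau (k + 1)%Z (r + 1)%Z)))).
  { intros k; rewrite Hbot, <- Hh, <- (Hlam k); apply (KC_tile_spec _ (Hin k _)). }
  exists lam; split.
  - destruct (proj2 (proj2 (KC_tile_spec _ (Hin 0%Z (r + 1)%Z)))) as [[Hf _]|[Hf _]];
      [left|right]; fold lam in Hf; split; auto; intros k; rewrite Hbot;
      destruct (proj2 (proj2 (KC_tile_spec _ (Hin k (r + 1)%Z)))) as [[Hf' Hb]|[Hf' Hb]];
      rewrite Hlam in Hf'; auto; exfalso; rewrite Hf in Hf'; lra.
  - intros a n; rewrite (segsum_telescope _ _ _ _ Htop).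
    pose proof (carry_bounds (t_left (tau a (r + 1)%Z))).
    pose proof (carry_bounds (t_left (tau (a + Z.of_nat n)%Z (r + 1)%Z))); lra.
Qed.

Lemma KC_row_avg_step tau : KC_tiling tau -> forall r,
  kc_pair_step (upper_avg (row tau r)) (lower_avg (row tau r))
               (upper_avg (row tau (r + 1))) (lower_avg (row tau (r + 1))).
Proof.
  intros Htil r; destruct (KC_row_relation tau Htil r) as [lam [Hcase Hrel]].
  assert (Hrow : forall r k, 0 <= row tau r k <= 2) by (intros; apply hval_bounds).
  assert (Hpos : 0 < lam) by (destruct Hcase as [[-> _]|[-> _]]; lra).
  destruct (avg_scale _ _ 0 2 0 2 lam 2 (Hrow (r + 1)%Z) (Hrow r) Hpos Hrel) as [-> ->].
  destruct Hcase as [[-> Hb]|[-> Hb]];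
    pose proof (upper_avg_bounds _ _ _ Hb); pose proof (lower_avg_bounds _ _ _ Hb);
    [left|right]; lra.
Qed.

Theorem mainTheorem4 :
  forall (tau : Z -> Z -> tile), KC_tiling tau ->
  forall j : Z, exists x : R,
    has_average (fun k : Z => hval (t_top (tau k j))) x.
Proof.
  intros tau Htil j.
  set (al k := upper_avg (row tau (j + Z.of_nat k))).
  set (be k := lower_avg (row tau (j + Z.of_nat k))).
  assert (Hstep : forall k, kc_pair_step (al k) (be k) (al (S k)) (be (S k))).
  { intros k; unfold al, be; rewrite Nat2Z.inj_succ, <- Z.add_1_r, Z.add_assoc.
    apply KC_row_avg_step, Htil. }
  pose proof (kc_pair_orbit_eq al be Hstep) as Heq; unfold al, be in Heq.
  rewrite Z.add_0_r in Heq.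
  exists (upper_avg (row tau j)).
  apply (has_average_of_lower_eq_upper _ 0 2); [intros k; apply hval_bounds|symmetry; exact Heq].
Qed.
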